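(* Let $\mathcal{O}$ be a nonsymmetric operad and $\mathcal{O}^{\mathrm{Dend}}$ the associated operad. Define $\varphi_n:\mathcal{O}^{\mathrm{Dend}}(n)\to\mathcal{O}(n)$ by $\varphi_n(f^{[1]},\dots,f^{[n]})=f^{[1]}+\cdots+f^{[n]}$. Then $\varphi=\{\varphi_n\}_{n\ge1}:\mathcal{O}^{\mathrm{Dend}}\to\mathcal{O}$ is a morphism of nonsymmetric operads. In particular, if $(\pi_\prec,\pi_\succ)$ is a dendriform-multiplication on $\mathcal{O}$, then $\varphi$ induces a morphism of Gerstenhaber algebras $\varphi_*:H^\bullet_{(\pi_\prec,\pi_\succ)}(\mathcal{O}^{\mathrm{Dend}})\to H^\bullet_{\pi_{\mathrm{Tot}}}(\mathcal{O})$, where $\pi_{\mathrm{Tot}}=\pi_\prec+\pi_\succ$.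
   Context: $\mathbf{k}$ is a commutative unital ring of characteristic $0$; a nonsymmetric operad consists of $\mathbf{k}$-modules $\mathcal{O}(n)$, bilinear partial compositions $\circ_i$ and unit $\mathds{1}$ with the usual axioms; a morphism of operads is a family of linear maps commuting with all $\circ_i$ and preserving units. $C_n=\{[1],\dots,[n]\}$ formal symbols; $\mathcal{O}^{\mathrm{Dend}}(n)=\mathbf{k}[C_n]\otimes\mathcal{O}(n)$ with elements $f=(f^{[1]},\dots,f^{[n]})$, $f^{[r]}\in\mathcal{O}(n)$; partial compositions $(f\circ_i^{\mathrm{Dend}}g)^{[r]}=f^{R_0[r]}\circ_i g^{R_i[r]}$ for $1\le r\le m+n-1$, where $R_0[r]=[r]$ if $r\le i-1$, $[i]$ if $i\le r\le i+n-1$, $[r-n+1]$ if $r\ge i+n$; $R_i[r]=[r-i+1]$ if $i\le r\le i+n-1$ and $[1]+\cdots+[n]$ otherwise, with $g^{[1]+\cdots+[n]}:=g^{[1]}+\cdots+g^{[n]}$; unit $\mathds{1}^{[1]}$. A dendriform-multiplication is a pair $(\pi_\prec,\pi_\succ)$ in $\mathcal{O}(2)$ with $\pi_\prec\circ_1\pi_\prec=\pi_\prec\circ_2(\pi_\prec+\pi_\succ)$, $\pi_\prec\circ_1\pi_\succ=\pi_\succ\circ_2\pi_\prec$, $\pi_\succ\circ_1(\pi_\prec+\pi_\succ)=\pi_\succ\circ_2\pi_\succ$; then $(\pi_\prec,\pi_\succ)$ is a multiplication (i.e. $\pi\circ_1\pi=\pi\circ_2\pi$) on $\mathcal{O}^{\mathrm{Dend}}$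 and $\pi_\prec+\pi_\succ$ is a multiplication on $\mathcal{O}$. For an operad $\mathcal{P}$ with multiplication $\pi$: $\llbracket f,g\rrbracket=\sum_{i=1}^m(-1)^{(n-1)(i-1)}f\circ_i g-(-1)^{(m-1)(n-1)}\sum_{i=1}^n(-1)^{(m-1)(i-1)}g\circ_i f$ ($f\in\mathcal{P}(m)$, $g\in\mathcal{P}(n)$), $f\smile_\pi g=(-1)^{mn+1}(\pi\circ_2 g)\circ_1 f$, $\delta_\pi=\llbracket\pi,-\rrbracket$, and $H^\bullet_\pi(\mathcal{P})$ is the cohomology of $(\mathcal{P}(n),\delta_\pi)_{n\ge1}$, which is a Gerstenhaber algebra (graded-commutative associative product of degree $0$ plus a degree $-1$ graded Lie bracket satisfying the graded Leibniz rule) with product and bracket induced by $\smile_\pi$ and $\llbracket\,,\,\rrbracket$. $H^\bullet_{(\pi_\prec,\pi_\succ)}(\mathcal{O}^{\mathrm{Dend}})$ denotes $H^\bullet_{(\pi_\prec,\pi_\succ)}$ computed in $\mathcal{O}^{\mathrm{Dend}}$. A Gerstenhaber algebra morphism is a degree-preserving linear map preserving product and bracket. *)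

From HB Require Import structures.
From mathcomp Require Import all_boot all_order all_algebra.
Set Implicit Arguments.
Unset Strict Implicit.
Unset Printing Implicit Defensive.
Import GRing.Theory.
Local Open Scope ring_scope.

(* CONVENTION (degree shift): a graded family  P : nat -> lmodType R  is read
   with  P n  = the paper's  P(n+1)  (elements of arity n+1).  Partial compositions are indexed 1-based as in the paper:
   comp m n i f g = f o_i g, meaningful for 1 <= i <= m+1; it lands in
   P (m+n), the paper's P((m+1)+(n+1)-1). *)

Section Generic.
Variable R : comRingType.

Definition castP (P : nat -> lmodType R) (m n : nat) (e : m = n) (x : P m) : P n :=
  eq_rect m (fun k => P k) x n e.

Definition compT (P : nat -> lmodType R) :=
  forall m n : nat, nat -> P m -> P n -> P (m + n)%N.

Definition is_ns_operad (P : nat -> lmodType R) (comp : compT P) (one : P 0%N) : Prop :=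
  [/\ (forall m n i (a : R) (f f' : P m) (g : P n),
         comp m n i (a *: f + f') g = a *: comp m n i f g + comp m n i f' g),
      (forall m n i (a : R) (f : P m) (g g' : P n),
         comp m n i f (a *: g + g') = a *: comp m n i f g + comp m n i f g'),
      (forall m n p i j (f : P m) (g : P n) (h : P p),
         (1 <= i <= m.+1)%N -> (1 <= j <= n.+1)%N ->
         comp (m + n)%N p (i + j - 1)%N (comp m n i f g) h
         = castP (addnA m n p) (comp m (n + p)%N i f (comp n p j g h))),
      (forall m n p i j (f : P m) (g : P n) (h : P p),
         (1 <= i)%N -> (i < j)%N -> (j <= m.+1)%N ->
         comp (m + p)%N n i (comp m p j f h) g
         = castP (addnAC m n p) (comp (m + n)%N p (j + n)%N (comp m n i f g) h)) &
      (forall n (f : P n), comp 0%N n 1%N one f = castP (esym (add0n n)) f)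
      /\ (forall m i (f : P m), (1 <= i <= m.+1)%N ->
            comp m 0%N i f one = castP (esym (addn0 m)) f)].

Definition is_ns_operad_morphism (P Q : nat -> lmodType R)
    (compP : compT P) (oneP : P 0%N) (compQ : compT Q) (oneQ : Q 0%N)
    (phi : forall n, P n -> Q n) : Prop :=
  [/\ (forall n (a : R) (x y : P n), phi n (a *: x + y) = a *: phi n x + phi n y),
      (forall m n i (f : P m) (g : P n), (1 <= i <= m.+1)%N ->
         phi (m + n)%N (compP m n i f g) = compQ m n i (phi m f) (phi n g)) &
      phi 0%N oneP = oneQ].

Definition sgnr (V : lmodType R) (k : nat) (x : V) : V := if odd k then - x else x.

Unset Implicit Arguments.
Variables (P : nat -> lmodType R) (comp : compT P).
Set Implicit Arguments.

Definition gbrak (m n : nat) (f : P m) (g : P n) : P (m + n)%N :=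
  \sum_(i < m.+1) sgnr (n * i) (comp m n i.+1 f g)
  - sgnr (m * n) (\sum_(i < n.+1) sgnr (m * i) (castP (addnC n m) (comp n m i.+1 g f))).

Lemma cup_eq (m n : nat) : (1 + n + m = (m + n).+1)%N.
Proof. by rewrite add1n addSn addnC. Qed.

Definition gcup (pi : P 1%N) (m n : nat) (f : P m) (g : P n) : P (m + n).+1 :=
  sgnr ((m.+1 * n.+1).+1)
    (castP (cup_eq m n) (comp (1 + n)%N m 1%N (comp 1%N n 2%N pi g) f)).

Definition gdelta (pi : P 1%N) (n : nat) (f : P n) : P n.+1 :=
  castP (add1n n) (gbrak pi f).

Definition is_mult (pi : P 1%N) : Prop :=
  comp 1%N 1%N 1%N pi pi = comp 1%N 1%N 2%N pi pi.

Definition cocycle (pi : P 1%N) (n : nat) (x : P n) : Prop := gdelta pi x = 0.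

Definition coboundary (pi : P 1%N) (n : nat) : P n -> Prop :=
  match n as n0 return P n0 -> Prop with
  | 0%N => fun x => x = 0
  | k.+1 => fun x => exists y : P k, x = gdelta pi y
  end.

End Generic.

Section Dend.
Unset Implicit Arguments.
Variables (R : comRingType) (O : nat -> lmodType R) (comp : compT O).
Set Implicit Arguments.

(* O^Dend(n+1) = k[C_{n+1}] (x) O(n+1) : tuples indexed by 'I_n.+1
   (component j : 'I_n.+1 is the paper's f^{[j+1]}) *)
Definition Dend (n : nat) : lmodType R := {ffun 'I_n.+1 -> O n}.

(* 1-based access f^{[k]} *)
Definition dcomp (n : nat) (f : Dend n) (k : nat) : O n := f (inord k.-1).
Definition dsum (n : nat) (f : Dend n) : O n := \sum_(j < n.+1) f j.

(* partial composition of O^Dend; r = r0+1 is the paper's index [r] *)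
Definition dend_comp : compT Dend := fun m n i f g =>
  [ffun r0 : 'I_(m + n).+1 =>
     let r := r0.+1 in
     if (r < i)%N then comp m n i (dcomp f r) (dsum g)
     else if (r < i + n.+1)%N then comp m n i (dcomp f i) (dcomp g (r - i + 1))
     else comp m n i (dcomp f (r - n)) (dsum g)].

Definition dend_one (one : O 0%N) : Dend 0%N := [ffun _ => one].

Definition phiD (n : nat) (f : Dend n) : O n := dsum f.

Definition dend_pair (pl pr : O 1%N) : Dend 1%N :=
  [ffun j : 'I_2 => if j == ord0 then pl else pr].

Definition is_dend_mult (pl pr : O 1%N) : Prop :=
  [/\ comp 1%N 1%N 1%N pl pl = comp 1%N 1%N 2%N pl (pl + pr),
      comp 1%N 1%N 1%N pl pr = comp 1%N 1%N 2%N pr pl &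
      comp 1%N 1%N 1%N pr (pl + pr) = comp 1%N 1%N 2%N pr pr].

End Dend.

From HB Require Import structures.
From mathcomp Require Import all_boot all_order all_algebra.
From mathcomp Require Import zify.

Set Implicit Arguments.
Unset Strict Implicit.
Unset Printing Implicit Defensive.
Import GRing.Theory.
Local Open Scope ring_scope.

(* Summing the components of a dendriform composite f o_i g gives
   (sum_r f^[r]) o_i (sum_s g^[s]): the components [r] with i <= r <= i+n-1
   contribute f^[i] o_i g^[r-i+1], one for each component of g, and every
   other component contributes some f^[r'] composed with the full sum of g.  It sends (pi_<, pi_>) to pi_Tot, hence it
   commutes on the nose with the bracket, the cup product and the
   differential, and therefore induces a morphism of Gerstenhaber algebras on
   cohomology. *)

Section OperadMorphism.
Unset Implicit Arguments.
Variables (R : comNzRingType) (P Q : nat -> lmodType R).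
Variables (compP : compT P) (compQ : compT Q) (phi : forall n, P n -> Q n).
Set Implicit Arguments.
Hypothesis phi_linear : forall n, linear (phi n).
Hypothesis phi_comp : forall m n i (f : P m) (g : P n), (1 <= i <= m.+1)%N ->
  phi (m + n)%N (compP m n i f g) = compQ m n i (phi m f) (phi n g).

Lemma morphB n : {morph phi n : x y / x - y}.
Proof. exact: zmod_morphism_linear. Qed.

Lemma morph0 n : phi n 0 = 0.
Proof. by have := morphB (0 : P n) 0; rewrite !subrr. Qed.

Lemma morphN n : {morph phi n : x / - x}.
Proof. by move=> x; rewrite -sub0r morphB morph0 sub0r. Qed.

Lemma morph_sum n (I : Type) (r : seq I) (F : I -> P n) :
  phi n (\sum_(i <- r) F i) = \sum_(i <- r) phi n (F i).
Proof.
apply: big_morph; last exact: morph0.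
by move=> x y; rewrite -{1}[y]opprK morphB morphN opprK.
Qed.

Lemma morph_sgnr n k (x : P n) : phi n (sgnr k x) = sgnr k (phi n x).
Proof. by rewrite /sgnr; case: odd; rewrite ?morphN. Qed.

Lemma morph_castP m n (e : m = n) (x : P m) : phi n (castP e x) = castP e (phi m x).
Proof. by case: n / e. Qed.

Lemma morph_gbrak m n (f : P m) (g : P n) :
  phi (m + n)%N (gbrak compP f g) = gbrak compQ (phi m f) (phi n g).
Proof.
rewrite /gbrak morphB morph_sgnr !morph_sum; congr (_ - sgnr _ _).
  apply: eq_bigr => i _; rewrite morph_sgnr phi_comp //.
  by case: i => /= i; lia.
apply: eq_bigr => i _; rewrite morph_sgnr morph_castP phi_comp //.
by case: i => /= i; lia.
Qed.

Lemma morph_gcup (pi : P 1) m n (f : P m) (g : P n) :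
  phi (m + n).+1 (gcup compP pi f g) = gcup compQ (phi 1%N pi) (phi m f) (phi n g).
Proof. by rewrite /gcup morph_sgnr morph_castP !phi_comp. Qed.

Lemma morph_gdelta (pi : P 1) n (f : P n) :
  phi n.+1 (gdelta compP pi f) = gdelta compQ (phi 1%N pi) (phi n f).
Proof. by rewrite /gdelta morph_castP morph_gbrak. Qed.

Lemma morph_cocycle (pi : P 1) n (x : P n) :
  cocycle compP pi x -> cocycle compQ (phi 1%N pi) (phi n x).
Proof. by rewrite /cocycle -morph_gdelta => ->; rewrite morph0. Qed.

Lemma morph_coboundary (pi : P 1) n (x : P n) :
  coboundary compP pi x -> coboundary compQ (phi 1%N pi) (phi n x).
Proof.
case: n x => [|n] x /=; first by move=> ->; rewrite morph0.
by case=> y ->; exists (phi n y); rewrite morph_gdelta.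
Qed.

End OperadMorphism.

Lemma sgnr0 (R : comNzRingType) (V : lmodType R) k : sgnr k (0 : V) = 0.
Proof. by rewrite /sgnr; case: odd; rewrite ?oppr0. Qed.

Lemma castP0 (R : comNzRingType) (P : nat -> lmodType R) m n (e : m = n) :
  castP e (0 : P m) = 0.
Proof. by case: n / e. Qed.

Section BilinearComposition.
Unset Implicit Arguments.
Variables (R : comNzRingType) (O : nat -> lmodType R) (comp : compT O).
Set Implicit Arguments.
Hypothesis compPl : forall m n i (a : R) (f f' : O m) (g : O n),
  comp m n i (a *: f + f') g = a *: comp m n i f g + comp m n i f' g.
Hypothesis compPr : forall m n i (a : R) (f : O m) (g g' : O n),
  comp m n i f (a *: g + g') = a *: comp m n i f g + comp m n i f g'.

Fact comp_bilinear m n i : bilinear_for *:%R *:%R (comp m n i).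
Proof. by split=> [g a f f'|f a g g']; [exact: compPl|exact: compPr]. Qed.

HB.instance Definition _ m n i :=
  bilinear_isBilinear.Build R (O m) (O n) (O (m + n)%N) *:%R *:%R (comp m n i)
    (comp_bilinear m n i).

Lemma coboundary0 (pi : O 1) n : coboundary comp pi (0 : O n).
Proof.
case: n => //= n; exists 0.
rewrite /gdelta /gbrak big1 => [|i _]; last by rewrite linear0r sgnr0.
rewrite big1 => [|i _]; last by rewrite linear0l castP0 sgnr0.
by rewrite sgnr0 subr0 castP0.
Qed.

Lemma dsum_nat n (f : Dend O n) : dsum f = \sum_(0 <= r < n.+1) f (inord r).
Proof. by rewrite big_mkord; apply: eq_bigr => r _; rewrite inord_val. Qed.

Lemma phiD_linear n : linear (@phiD R O n).
Proof.
move=> a x y; rewrite /phiD /dsum scaler_sumr -big_split.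
by apply: eq_bigr => j _; rewrite !ffunE.
Qed.

Lemma phiD_comp m n i (f : Dend O m) (g : Dend O n) : (1 <= i <= m.+1)%N ->
  phiD (dend_comp comp i f g) = comp m n i (phiD f) (phiD g).
Proof.
case: i => // j /= le_j_m.
(* The composite's components are indexed from 0: the block of g is j <= r < j + n.+1. *)
set G := phiD g; rewrite /phiD [dsum f]dsum_nat dsum_nat.
rewrite (big_cat_nat _ (n := j)) /=; [|lia|lia].
rewrite (big_cat_nat _ (m := j) (n := (j + n.+1)%N)) /=; [|lia|lia].
rewrite (big_cat_nat _ (m := 0%N) (n := j) (p := m.+1)) /=; [|lia|lia].
rewrite [in RHS](big_ltn (m := j)) // !linearDl !linear_sumlz.
congr (_ + (_ + _)).
- apply: eq_big_nat => r lt_r_j; rewrite ffunE inordK /=; last by lia.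
  by rewrite ifT; last by lia.
- rewrite /G /phiD dsum_nat linear_sumr (big_addn 0 _ j) addKn.
  apply: eq_big_nat => s lt_s_n; rewrite ffunE inordK /=; last by lia.
  rewrite ifF; last by lia.
  rewrite ifT; last by lia.
  by rewrite /dcomp; congr (comp _ _ _ _ (g (inord _))); lia.
- rewrite (big_addn 0 _ (j + n.+1)) (big_addn 0 _ j.+1).
  have -> : ((m + n).+1 - (j + n.+1) = m.+1 - j.+1)%N by lia.
  apply: eq_big_nat => r lt_r; rewrite ffunE inordK /=; last by lia.
  rewrite ifF; last by lia.
  rewrite ifF; last by lia.
  by rewrite /dcomp; congr (comp _ _ _ (f (inord _)) _); lia.
Qed.

Lemma phiD_morphism (one : O 0) :
  is_ns_operad_morphism (dend_comp comp) (dend_one one) comp one (phiD (O:=O)).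
Proof.
split; [exact: phiD_linear|exact: phiD_comp|].
by rewrite /phiD /dsum big_ord1 ffunE.
Qed.

End BilinearComposition.

Lemma phiD_dend_pair (R : comNzRingType) (O : nat -> lmodType R) (pl pr : O 1) :
  phiD (dend_pair pl pr) = pl + pr.
Proof. by rewrite /phiD /dsum big_ord_recl big_ord1 !ffunE. Qed.

Theorem proposition4p6 (R : comRingType)
  (char0 : forall n : nat, (0 < n)%N -> (n%:R : R) != 0)
  (O : nat -> lmodType R) (comp : compT O) (one : O 0%N)
  (HO : is_ns_operad comp one) :
  is_ns_operad_morphism (dend_comp comp) (dend_one one) comp one (phiD (O:=O))
  /\
  (forall pl pr : O 1%N, is_dend_mult comp pl pr ->
   let piD := dend_pair pl pr in
   let piT := pl + pr in
   (* phi_* is well defined on cohomology *)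
   (forall n (x : Dend O n),
      cocycle (dend_comp comp) piD x -> cocycle comp piT (phiD x)) /\
   (forall n (x : Dend O n),
      coboundary (dend_comp comp) piD x -> coboundary comp piT (phiD x)) /\
   (* phi_* preserves the cup product in cohomology *)
   (forall m n (x : Dend O m) (y : Dend O n),
      cocycle (dend_comp comp) piD x -> cocycle (dend_comp comp) piD y ->
      coboundary comp piT
        (phiD (gcup (dend_comp comp) piD x y) - gcup comp piT (phiD x) (phiD y))) /\
   (* phi_* preserves the Gerstenhaber bracket in cohomology *)
   (forall m n (x : Dend O m) (y : Dend O n),
      cocycle (dend_comp comp) piD x -> cocycle (dend_comp comp) piD y ->
      coboundary comp piT
        (phiD (gbrak (dend_comp comp) x y) - gbrak comp (phiD x) (phiD y)))).
Proof.
case: HO => compPl compPr _ _ _.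
have phi_morph := phiD_morphism compPl compPr one.
split=> [//|pl pr _ piD piT].
have [phi_linear phi_comp _] := phi_morph.
have piD_sum : phiD piD = piT := phiD_dend_pair pl pr.
split; [|split; [|split]].
- by move=> n x /(morph_cocycle phi_linear phi_comp); rewrite piD_sum.
- by move=> n x /(morph_coboundary phi_linear phi_comp); rewrite piD_sum.
- move=> m n x y _ _; rewrite (morph_gcup phi_linear phi_comp) piD_sum subrr.
  exact: coboundary0.
- move=> m n x y _ _; rewrite (morph_gbrak phi_linear phi_comp) subrr.
  exact: coboundary0.
Qed.
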